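(* For conjunctive guarded systems of type $(A,B)$ and every LTL formula without the next operator $h(A,B_1)$: for all $n\ge1$, if some unconditionally fair initializing run of $(A,B)^{(1,n)}$ satisfies $h(A,B_1)$, then some unconditionally fair initializing run of $(A,B)^{(1,1)}$ satisfies $h(A,B_1)$.
   Context: A process template is $U=(Q_U,\mathit{init}_U,\Sigma_U,\delta_U)$ with finite states $Q_U$, initial state $\mathit{init}_U$, finite input alphabet $\Sigma_U$ and guarded transitions $\delta_U\subseteq Q_U\times\Sigma_U\times 2^{Q_A\cup Q_B}\times Q_U$; templates $A,B$ have disjoint state sets and disjoint alphabets. The system $(A,B)^{(1,n)}$ consists of one copy of $A$ and $n$ copies $B_1,\dots,B_n$ of $B$; a global state $s$ gives each process a local state, a global input $e$ gives each process an input letter, and initially all processes are in their initial states. In a conjunctive system a guard $g$ is satisfied for process $p$ in $s$ iff every process $p'\ne p$ has $s(p')\in g$, and $\mathit{init}_A,\mathit{init}_B$ belong to every guard. A local transition $(q,\sigma,g,q')$ of $p$ is enabled for $(s,e)$ if $s(p)=q$, $e(p)=\sigma$ and $g$ is satisfied for $p$ in $s$; a global step changes the state of exactly one process along an enabled transition. A path is a sequence of configurations $(s_1,e_1,p_1),(s_2,e_2,p_2),\dots$ where $p_t$ makes the step from $s_t$ to $s_{t+1}$ under $e_t$, a configuration $(s,e,\bot)$ occurs (as the last one) exactly when all processes are disabled, and $e_{t+1}(p)=e_t(p)$ for every process $p$ not moving at moment $t$. A run is a maximal path from the initial state. A run is unconditionally fair if it is infinite and every process moves infinitely often; it is initializing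 if every process that moves infinitely often visits its template's initial state infinitely often. $h(A,B_1)$ is an LTL formula without next operator over atomic propositions from $Q_A\cup\Sigma_A$ and $(Q_B\cup\Sigma_B)\times\{1\}$, interpreted on the local states and inputs of $A$ and $B_1$ along the run. *)

From mathcomp Require Import all_boot.
Set Implicit Arguments. Unset Strict Implicit. Unset Printing Implicit Defensive.

(* A process template U = (Q, init, Sigma, delta) whose guards are subsets of
   the global local-state space G (= Q_A + Q_B). *)
Record template (Q S G : finType) := Template {
  tinit  : Q;
  tdelta : Q -> S -> {set G} -> Q -> bool }.

Section System.
Variables (QA QB SA SB : finType).
Notation G := (QA + QB)%type.
Variables (A : template QA SA G) (B : template QB SB G).

Definition conjunctive : Prop :=
  (forall q a g q', tdelta A q a g q' -> (inl (tinit A) \in g) /\ (inr (tinit B) \in g)) /\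
  (forall q b g q', tdelta B q b g q' -> (inl (tinit A) \in g) /\ (inr (tinit B) \in g)).

Variable n : nat.
(* Processes of (A,B)^(1,n): None = the copy of A, Some i = B_(i+1). *)
Definition proc := option 'I_n.
Definition gstate := (QA * ('I_n -> QB))%type.
Definition ginput := (SA * ('I_n -> SB))%type.

Definition lstate (s : gstate) (p : proc) : G :=
  match p with None => inl s.1 | Some i => inr (s.2 i) end.
Definition linput (e : ginput) (p : proc) : (SA + SB)%type :=
  match p with None => inl e.1 | Some i => inr (e.2 i) end.
Definition init_of (p : proc) : G :=
  match p with None => inl (tinit A) | Some _ => inr (tinit B) end.

Definition guard_sat (s : gstate) (p : proc) (g : {set G}) : Prop :=
  forall p', p' <> p -> lstate s p' \in g.

Definition step (s : gstate) (e : ginput) (p : proc) (s' : gstate) : Prop :=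
  match p with
  | None => exists g, [/\ tdelta A s.1 e.1 g s'.1, guard_sat s None g
                         & forall j, s'.2 j = s.2 j]
  | Some i => exists g, [/\ tdelta B (s.2 i) (e.2 i) g (s'.2 i),
                            guard_sat s (Some i) g, s'.1 = s.1
                          & forall j, j <> i -> s'.2 j = s.2 j]
  end.

(* infinite run (an infinite path from the initial state is maximal):
   configurations (s t, e t, p t) *)
Definition infinite_run (s : nat -> gstate) (e : nat -> ginput) (p : nat -> proc) : Prop :=
  [/\ (s 0).1 = tinit A, (forall i, (s 0).2 i = tinit B),
      (forall t, step (s t) (e t) (p t) (s t.+1))
    & (forall t q, q <> p t -> linput (e t.+1) q = linput (e t) q)].

Definition moves_inf_often (p : nat -> proc) (q : proc) : Prop :=
  forall t, exists t', t <= t' /\ p t' = q.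

Definition uncond_fair (p : nat -> proc) : Prop := forall q, moves_inf_often p q.

Definition initializing (s : nat -> gstate) (p : nat -> proc) : Prop :=
  forall q, moves_inf_often p q ->
    forall t, exists t', t <= t' /\ lstate (s t') q = init_of q.

End System.

Inductive ltlx (AP : Type) :=
| LTrue
| LAtom of AP
| LNot of ltlx AP
| LAnd of ltlx AP & ltlx AP
| LUntil of ltlx AP & ltlx AP.
Arguments LTrue {AP}.

Fixpoint holds (AP : Type) (L : nat -> AP -> Prop) (f : ltlx AP) (t : nat) : Prop :=
  match f with
  | LTrue => True
  | LAtom a => L t a
  | LNot f1 => ~ holds L f1 t
  | LAnd f1 f2 => holds L f1 t /\ holds L f2 t
  | LUntil f1 f2 => exists k, t <= k /\ holds L f2 k /\
                      forall j, t <= j -> j < k -> holds L f1 j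
  end.

(* atomic propositions of h(A,B_1): Q_A ∪ Σ_A and (Q_B ∪ Σ_B) × {1} *)
Definition APAB (QA QB SA SB : finType) := ((QA + SA) + (QB + SB))%type.

Definition label (QA QB SA SB : finType) n (s : nat -> gstate QA QB n)
  (e : nat -> ginput SA SB n) (b1 : 'I_n) (t : nat) (a : APAB QA QB SA SB) : Prop :=
  match a with
  | inl (inl q) => (s t).1 = q
  | inl (inr x) => (e t).1 = x
  | inr (inl q) => (s t).2 b1 = q
  | inr (inr x) => (e t).2 b1 = x
  end.

Definition exists_fair_init_run_sat (QA QB SA SB : finType)
  (A : template QA SA (QA + QB)%type) (B : template QB SB (QA + QB)%type)
  n (b1 : 'I_n) (h : ltlx (APAB QA QB SA SB)) : Prop :=
  exists (s : nat -> gstate QA QB n) (e : nat -> ginput SA SB n) (p : nat -> proc n),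
    [/\ infinite_run A B s e p, uncond_fair p, initializing A B s p
      & holds (label s e b1) h 0].

From mathcomp Require Import all_boot.
Set Implicit Arguments. Unset Strict Implicit. Unset Printing Implicit Defensive.

(* Keep only the moments at which A or B_1 moves and restrict every
   configuration to A and B_1.  Satisfaction of a conjunctive guard only
   becomes easier when processes are removed, so each retained step is still a
   step of (A,B)^(1,1); the discarded steps leave A and B_1 (states and inputs)
   unchanged, so the projected run is stutter-equivalent to the original one on
   the atomic propositions of h, and LTL without next cannot tell
   stutter-equivalent sequences apart.  Fairness and initialization of A and
   B_1 transfer because their witnesses are retained moments. *)
Section Stuttering.
Variables (AP : Type) (L L' : nat -> AP -> Prop) (f : nat -> nat).
Hypothesis f_homo : {homo f : t u / t <= u}.
Hypothesis f_leS : forall t, f t.+1 <= (f t).+1.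
Hypothesis f_unbounded : forall m, exists t, m <= f t.
Hypothesis L_f : forall t a, L t a <-> L' (f t) a.

Lemma first_hit t m : f t <= m ->
  exists2 j, t <= j /\ f j = m & forall i, t <= i < j -> f i < m.
Proof.
move=> le_ftm; have [u le_mfu] := f_unbounded m.
have ex_hit : exists j, (t <= j) && (m <= f j).
  by exists (maxn t u); rewrite leq_maxl (leq_trans le_mfu) ?f_homo ?leq_maxr.
case: (ex_minnP ex_hit) => j /andP[le_tj le_mfj] min_j.
have below i : t <= i < j -> f i < m.
  case/andP=> le_ti lt_ij; rewrite ltnNge; apply: contraTN lt_ij => le_mfi.
  by rewrite -leqNgt min_j ?le_ti.
exists j => //; split => //; apply/eqP; rewrite eqn_leq le_mfj andbT.
have [-> // | ne_jt] := eqVneq j t.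
have lt_tj : t < j by rewrite ltn_neqAle eq_sym ne_jt.
case: j lt_tj below {le_tj le_mfj min_j ne_jt} => // i lt_ti below.
by rewrite (leq_trans (f_leS i)) // below // -ltnS lt_ti /=.
Qed.

Lemma holds_stutter (phi : ltlx AP) t : holds L phi t <-> holds L' phi (f t).
Proof.
elim: phi t => [|a|phi IH|phi1 IH1 phi2 IH2|phi1 IH1 phi2 IH2] t /=.
- by [].
- exact: L_f.
- by move: (IH t); tauto.
- by move: (IH1 t) (IH2 t); tauto.
split=> [[k [le_tk [H2 H1]]] | [k' [le_ftk' [H2 H1]]]].
  exists (f k); split; first exact: f_homo.
  split=> [|j' le_ftj' lt_j'fk]; first exact/IH2.
  have [j [le_tj fj] below] := first_hit le_ftj'.
  have lt_jk : j < k.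
    case: (ltngtP j k) => [// | lt_kj | eq_jk]; last by move: lt_j'fk; rewrite -eq_jk fj ltnn.
    by move: lt_j'fk; rewrite ltnNge ltnW // below // le_tk.
  by rewrite -fj; apply/IH1/H1.
have [j [le_tj fj] below] := first_hit le_ftk'.
exists j; split=> //; split=> [|i le_ti lt_ij]; first by apply/IH2; rewrite fj.
by apply/IH1/H1; rewrite ?f_homo // below ?le_ti.
Qed.

End Stuttering.

Section Enumeration.
Variable P : pred nat.
Hypothesis P_inf : forall t, exists u, t <= u /\ P u.

Lemma ex_sat_from t : exists u, (t <= u) && P u.
Proof. by have [u [le_tu Pu]] := P_inf t; exists u; rewrite le_tu. Qed.

Definition next_sat t := ex_minn (ex_sat_from t).

Lemma next_satP t :
  [/\ t <= next_sat t, P (next_sat t) & forall u, t <= u -> P u -> next_sat t <= u].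
Proof.
rewrite /next_sat; case: ex_minnP => m /andP[le_tm Pm] min_m.
by split=> // u le_tu Pu; rewrite min_m ?le_tu.
Qed.

Lemma next_sat_id t : P t -> next_sat t = t.
Proof.
move=> Pt; have [le_t _ min_t] := next_satP t.
by apply/eqP; rewrite eqn_leq le_t min_t.
Qed.

Lemma next_satS t : ~~ P t -> next_sat t.+1 = next_sat t.
Proof.
move=> nPt; have [le_t P_next min_t] := next_satP t.
have [le_tS P_nextS min_tS] := next_satP t.+1.
have lt_t : t < next_sat t by rewrite ltn_neqAle le_t andbT; apply: contraNneq nPt => ->.
by apply/eqP; rewrite eqn_leq min_tS // min_t // ltnW.
Qed.

Fixpoint enum_sat k := if k is k'.+1 then next_sat (enum_sat k').+1 else next_sat 0.

Definition count_sat t := count P (iota 0 t).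

Lemma enum_satP k : P (enum_sat k).
Proof. by case: k => [|k]; [case: (next_satP 0) | case: (next_satP (enum_sat k).+1)]. Qed.

Lemma enum_sat_lt : {homo enum_sat : i j / i < j}.
Proof. by apply: (homo_ltn ltn_trans) => k; case: (next_satP (enum_sat k).+1). Qed.

Lemma count_satS t : count_sat t.+1 = count_sat t + P t.
Proof. by rewrite /count_sat -addn1 iotaD count_cat /= addn0. Qed.

Lemma count_sat_homo : {homo count_sat : t u / t <= u}.
Proof. by apply: (homo_leq leqnn leq_trans) => t; rewrite count_satS leq_addr. Qed.

Lemma enum_count_sat t : enum_sat (count_sat t) = next_sat t.
Proof.
elim: t => [//|t IH]; rewrite count_satS.
case: (boolP (P t)) => [Pt | nPt]; last by rewrite addn0 IH next_satS.
by rewrite addn1 [LHS]/= IH (next_sat_id Pt).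
Qed.

Lemma count_enum_sat k : count_sat (enum_sat k) = k.
Proof.
apply: (incn_inj (leq_mono enum_sat_lt)).
by rewrite enum_count_sat next_sat_id ?enum_satP.
Qed.

Lemma leq_count_sat k t : enum_sat k <= t -> k <= count_sat t.
Proof. by move/count_sat_homo; rewrite count_enum_sat. Qed.

End Enumeration.

Section Projection.
Variables (QA QB SA SB : finType).
Variables (A : template QA SA (QA + QB)%type) (B : template QB SB (QA + QB)%type).
Variables (n : nat) (b1 : 'I_n).

Definition proj_state (x : gstate QA QB n) : gstate QA QB 1 := (x.1, fun=> x.2 b1).
Definition proj_input (y : ginput SA SB n) : ginput SA SB 1 := (y.1, fun=> y.2 b1).
Definition proj_proc (q : proc n) : proc 1 := omap (fun=> ord0) q.
Definition lift_proc (q : proc 1) : proc n := omap (fun=> b1) q.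
Definition relevant (q : proc n) : bool := if q is Some i then i == b1 else true.

Lemma lift_procK : cancel lift_proc proj_proc.
Proof. by case=> [j|] //=; rewrite (ord1 j). Qed.

Lemma lift_proc_inj : injective lift_proc.
Proof. exact: can_inj lift_procK. Qed.

Lemma proj_procK q : relevant q -> lift_proc (proj_proc q) = q.
Proof. by case: q => [i /eqP-> |]. Qed.

Lemma relevant_lift q : relevant (lift_proc q).
Proof. by case: q => /=. Qed.

Lemma lstate_proj x q : lstate (proj_state x) q = lstate x (lift_proc q).
Proof. by case: q. Qed.

Lemma linput_proj y q : linput (proj_input y) q = linput y (lift_proc q).
Proof. by case: q. Qed.

Lemma init_of_lift q : init_of A B (lift_proc q) = init_of A B q.
Proof. by case: q. Qed.

Lemma guard_sat_proj x q g :
  guard_sat x (lift_proc q) g -> guard_sat (proj_state x) q g.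
Proof. by move=> sat_g q' ne_q'q; rewrite lstate_proj sat_g // => /lift_proc_inj. Qed.

Lemma step_proj x y q z :
  step A B x y (lift_proc q) z -> step A B (proj_state x) (proj_input y) q (proj_state z).
Proof.
case: q => [j|] [g] /=.
- rewrite (ord1 j) => -[tr sat_g eq1 _]; exists g; split=> // [|j' ne_j'].
  + exact: (guard_sat_proj (q := Some ord0)).
  + by rewrite (ord1 j') in ne_j'.
- move=> [tr sat_g eq2]; exists g; split=> //.
  exact: (guard_sat_proj (q := None)).
Qed.

Section Run.
Variables (s : nat -> gstate QA QB n) (e : nat -> ginput SA SB n) (p : nat -> proc n).
Hypothesis s_run : infinite_run A B s e p.
Hypothesis p_fair : uncond_fair p.

Local Notation moved := (fun t => relevant (p t)).

Lemma relevant_inf t : exists u, t <= u /\ moved u.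
Proof. by have [u [le_tu pu]] := p_fair None t; exists u; rewrite pu. Qed.

Local Notation next_move := (next_sat relevant_inf).
Local Notation kth_move := (enum_sat relevant_inf).
Local Notation moves_before := (count_sat moved).

Lemma proj_frozenS t : ~~ relevant (p t) ->
  proj_state (s t.+1) = proj_state (s t) /\ proj_input (e t.+1) = proj_input (e t).
Proof.
have [_ _ run_step run_input] := s_run.
case E: (p t) => [i|] //= ne_ib1.
have ne_b1i : b1 <> i by apply/eqP; rewrite eq_sym.
have [g [_ _ eq1 eq2]] : step A B (s t) (e t) (Some i) (s t.+1) by rewrite -E; apply: run_step.
have [in1] : linput (e t.+1) None = linput (e t) None by rewrite run_input ?E.
have [in2] : linput (e t.+1) (Some b1) = linput (e t) (Some b1).
  by rewrite run_input // E => -[].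
by rewrite /proj_state /proj_input eq1 eq2 ?in1 ?in2.
Qed.

Lemma proj_frozen t u : t <= u -> (forall v, t <= v < u -> ~~ relevant (p v)) ->
  proj_state (s u) = proj_state (s t) /\ proj_input (e u) = proj_input (e t).
Proof.
elim: u => [|u IH]; first by rewrite leqn0 => /eqP->.
rewrite leq_eqVlt => /orP[/eqP-> // | lt_tu] still.
have [<- <-] : proj_state (s u) = proj_state (s t) /\ proj_input (e u) = proj_input (e t).
  by apply: IH lt_tu _ => v /andP[le_tv lt_vu]; rewrite still // le_tv ltnW.
by apply/proj_frozenS/still; rewrite -ltnS lt_tu /=.
Qed.

Lemma proj_next_move t :
  proj_state (s (next_move t)) = proj_state (s t) /\ proj_input (e (next_move t)) = proj_input (e t).
Proof.
have [le_t _ min_t] := next_satP relevant_inf t.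
apply: proj_frozen => // v /andP[le_tv lt_v]; apply: contraTN lt_v => rel_v.
by rewrite -leqNgt min_t.
Qed.

Lemma kth_moves_before t : relevant (p t) -> kth_move (moves_before t) = t.
Proof. by move=> rel_t; rewrite enum_count_sat next_sat_id. Qed.

Definition proj_s k := proj_state (s (kth_move k)).
Definition proj_e k := proj_input (e (kth_move k)).
Definition proj_p k := proj_proc (p (kth_move k)).

Lemma proj_infinite_run : infinite_run A B proj_s proj_e proj_p.
Proof.
have [init_A init_B run_step run_input] := s_run.
have [s0 _] : proj_s 0 = proj_state (s 0) /\ _ := proj_next_move 0.
have moveS k : proj_s k.+1 = proj_state (s (kth_move k).+1) /\
               proj_e k.+1 = proj_input (e (kth_move k).+1) by exact: proj_next_move.
have lift_p k : lift_proc (proj_p k) = p (kth_move k) by exact: proj_procK (enum_satP relevant_inf k).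
split.
- by rewrite s0; apply: init_A.
- by move=> i; rewrite s0; apply: init_B.
- by move=> k; have [-> _] := moveS k; apply: step_proj; rewrite lift_p.
- move=> k q ne_q; have [_ ->] := moveS k; rewrite /proj_e !linput_proj run_input //.
  by rewrite -lift_p => /lift_proc_inj.
Qed.

Lemma proj_moves_before t :
  proj_s (moves_before t) = proj_state (s t) /\ proj_e (moves_before t) = proj_input (e t).
Proof. by rewrite /proj_s /proj_e enum_count_sat; exact: proj_next_move. Qed.

Lemma proj_uncond_fair : uncond_fair proj_p.
Proof.
move=> q k; have [t [le_kt pt]] := p_fair (lift_proc q) (kth_move k).
have rel_t : relevant (p t) by rewrite pt relevant_lift.
exists (moves_before t); split; first exact: (leq_count_sat le_kt).
by rewrite /proj_p kth_moves_before // pt lift_procK.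
Qed.

Lemma proj_initializing : initializing A B s p -> initializing A B proj_s proj_p.
Proof.
move=> s_init q _ k; have [t [le_kt init_t]] := s_init _ (p_fair (lift_proc q)) (kth_move k).
exists (moves_before t); split; first exact: (leq_count_sat le_kt).
by rewrite (proj_moves_before t).1 lstate_proj init_t init_of_lift.
Qed.

Lemma label_proj t a : label s e b1 t a <-> label proj_s proj_e ord0 (moves_before t) a.
Proof.
have [Es Ee] := proj_moves_before t.
by case: a => [[q|x]|[q|x]]; rewrite /label ?Es ?Ee.
Qed.

Lemma holds_proj phi :
  holds (label s e b1) phi 0 -> holds (label proj_s proj_e ord0) phi 0.
Proof.
have moves_beforeS t : moves_before t.+1 <= (moves_before t).+1.
  by rewrite count_satS -addn1 leq_add2l leq_b1.
have moves_before_unbounded m : exists t, m <= moves_before t.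
  by exists (kth_move m); rewrite count_enum_sat.
exact: (holds_stutter (count_sat_homo _) moves_beforeS moves_before_unbounded label_proj phi 0).1.
Qed.

End Run.

Lemma exists_fair_init_run_sat_proj h :
  exists_fair_init_run_sat A B b1 h -> exists_fair_init_run_sat A B (ord0 : 'I_1) h.
Proof.
move=> [s [e [p [run fair init holds_h]]]].
exists (proj_s s fair), (proj_e e fair), (proj_p fair); split.
- exact: proj_infinite_run run fair.
- exact: proj_uncond_fair.
- exact: (proj_initializing (p_fair := fair) run init).
- exact: holds_proj run fair _ holds_h.
Qed.

End Projection.

Theorem mainTheorem12 (QA QB SA SB : finType)
  (A : template QA SA (QA + QB)%type) (B : template QB SB (QA + QB)%type)
  (hconj : conjunctive A B) (h : ltlx (APAB QA QB SA SB))
  (n : nat) (hn : 0 < n) :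
  exists_fair_init_run_sat A B (Ordinal hn) h ->
  exists_fair_init_run_sat A B (ord0 : 'I_1) h.
Proof. exact: exists_fair_init_run_sat_proj. Qed.
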